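(* Let $n_0, n_1$ be positive integers and consider fixed (nonrandom) matrices $\mathbf{Z}_0 \in \mathbb{R}^{n_0\times m_0}$, $\mathbf{X}_0 \in \mathbb{R}^{n_0\times k}$, $\mathbf{W}_1 \in \mathbb{R}^{n_1\times k_1}$, $\mathbf{X}_1 \in \mathbb{R}^{n_1\times k}$, where the columns of $\mathbf{X}_0$ and $\mathbf{X}_1$ correspond to the same predictors in the same order, $\mathbf{Z}_0^{\prime}\mathbf{Z}_0$ and $\mathbf{W}_1^{\prime}\mathbf{W}_1$ are invertible, and $\tilde{\mathbf{X}}_0^{\prime}\tilde{\mathbf{X}}_0$ is invertible, where $$\mathbf{M}_0 = \mathbf{I} - \mathbf{Z}_0(\mathbf{Z}_0^{\prime}\mathbf{Z}_0)^{-1}\mathbf{Z}_0^{\prime},\quad \tilde{\mathbf{X}}_0 = \mathbf{M}_0\mathbf{X}_0,\quad \mathbf{M}_1 = \mathbf{I} - \mathbf{W}_1(\mathbf{W}_1^{\prime}\mathbf{W}_1)^{-1}\mathbf{W}_1^{\prime},\quad \tilde{\mathbf{X}}_1 = \mathbf{M}_1\mathbf{X}_1.$$ Consider the model $$\mathbf{y}_0 = \mathbf{Z}_0\boldsymbol{\alpha}_0 + \mathbf{X}_0\boldsymbol{\beta}_0 + \boldsymbol{\epsilon}_0,\qquad \mathbf{y}_1 = \mathbf{W}_1\boldsymbol{\alpha}_1 + \mathbf{X}_1\boldsymbol{\beta}_1 + \boldsymbol{\epsilon}_1,\qquad \boldsymbol{\beta}_1 = \boldsymbol{\beta}_0 +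 \boldsymbol{\eta},$$ where $\boldsymbol{\alpha}_0,\boldsymbol{\alpha}_1,\boldsymbol{\beta}_0$ are fixed, $\boldsymbol{\epsilon}_j$ ($j=0,1$) is a random vector with mean $\mathbf{0}$ and covariance $\sigma_j^2\mathbf{I}_{n_j}$, $\boldsymbol{\eta}$ is a random vector with mean $\mathbf{0}$ and covariance $\sigma_\eta^2\mathbf{I}_k$, and $\boldsymbol{\epsilon}_0,\boldsymbol{\epsilon}_1,\boldsymbol{\eta}$ are mutually independent. Define the prediction $$\hat{\mathbf{y}}_{1\mid 0} = \mathbf{W}_1\hat{\boldsymbol{\alpha}}_1 + \mathbf{X}_1\hat{\boldsymbol{\beta}}_0,\quad \hat{\boldsymbol{\beta}}_0 = (\tilde{\mathbf{X}}_0^{\prime}\tilde{\mathbf{X}}_0)^{-1}\tilde{\mathbf{X}}_0^{\prime}\mathbf{y}_0,\quad \hat{\boldsymbol{\alpha}}_1 = (\mathbf{W}_1^{\prime}\mathbf{W}_1)^{-1}\mathbf{W}_1^{\prime}(\mathbf{y}_1 - \mathbf{X}_1\hat{\boldsymbol{\beta}}_0).$$ Then $$\frac{1}{n_1}E\left[(\mathbf{y}_1 - \hat{\mathbf{y}}_{1\mid 0})^{\prime}(\mathbf{y}_1 - \hat{\mathbf{y}}_{1\mid 0})\right] = \frac{n_1 - k_1}{n_1}\sigma_1^2 + \frac{\sigma_\eta^2}{n_1}\operatorname{tr}\left(\tilde{\mathbf{X}}_1^{\prime}\tilde{\mathbf{X}}_1\right) + \frac{\sigma_0^2}{n_1}\operatorname{tr}\left\{(\tilde{\mathbf{X}}_0^{\prime}\tilde{\mathbf{X}}_0)^{-1}\tilde{\mathbf{X}}_1^{\prime}\tilde{\mathbf{X}}_1\right\},$$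 where $k_1$ is the number of predictors (columns) in $\mathbf{W}_1$.
   Context: Two datasets indexed by disjoint index sets $\mathcal{S}_0,\mathcal{S}_1$ with $n_j = |\mathcal{S}_j|$; $\mathbf{y}_j$ stacks the responses of dataset $j$. $\mathbf{X}_0,\mathbf{X}_1$ contain the predictors common to both datasets (with random coefficients linked by $\boldsymbol{\eta}$), while $\mathbf{Z}_0$ and $\mathbf{W}_1$ contain dataset-specific predictors with unrestricted coefficients. The expectation is over $\boldsymbol{\epsilon}_0,\boldsymbol{\epsilon}_1,\boldsymbol{\eta}$ with the design matrices held fixed. *)

From HB Require Import structures.
From mathcomp Require Import all_boot all_order all_algebra.
From mathcomp Require Import all_classical all_reals all_analysis.
Set Implicit Arguments.
Unset Strict Implicit.
Unset Printing Implicit Defensive.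
Import Order.TTheory GRing.Theory Num.Theory.
Local Open Scope classical_set_scope.
Local Open Scope ring_scope.

Definition rvcoord {T : Type} {R : Type} {n : nat} (V : T -> 'cV[R]_n) (i : 'I_n)
  : T -> R := fun w => V w i ord0.

Definition mean0_cov_scalar {d} {T : measurableType d} {R : realType}
  (P : probability T R) (n : nat) (V : T -> 'cV[R]_n) (s2 : R) : Prop :=
  [/\ (forall i, measurable_fun setT (rvcoord V i)),
      (forall i, rvcoord V i \in Lfun P 2),
      (forall i, ('E_P[rvcoord V i] = 0)%E) &
      (forall i j, covariance P (rvcoord V i) (rvcoord V j)
                   = (s2 * (i == j)%:R)%:E)].

Definition box_event {T : Type} {R : Type} {n : nat} (V : T -> 'cV[R]_n)
  (B : 'I_n -> set R) : set T := [set w | forall i, B i (V w i ord0)].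

(* Mutual independence of three random vectors: the joint law is the product
   of the marginals on measurable boxes (boxes form a pi-system generating the
   Borel sigma-algebras of R^n; taking some boxes equal to the whole space
   yields the product rule for every subfamily). *)
Definition independent3 {d} {T : measurableType d} {R : realType}
  (P : probability T R) {n0 n1 n2 : nat}
  (U : T -> 'cV[R]_n0) (V : T -> 'cV[R]_n1) (W : T -> 'cV[R]_n2) : Prop :=
  forall (A : 'I_n0 -> set R) (B : 'I_n1 -> set R) (C : 'I_n2 -> set R),
    (forall i, measurable (A i)) -> (forall i, measurable (B i)) ->
    (forall i, measurable (C i)) ->
    P (box_event U A `&` box_event V B `&` box_event W C)
    = (P (box_event U A) * P (box_event V B) * P (box_event W C))%E.

From HB Require Import structures.
From mathcomp Require Import all_boot all_order all_algebra.
From mathcomp Require Import all_classical all_reals all_analysis measurable_realfun.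
From mathcomp Require Import ring.
Set Implicit Arguments.
Unset Strict Implicit.
Unset Printing Implicit Defensive.
Import Order.TTheory GRing.Theory Num.Theory.
Local Open Scope classical_set_scope.
Local Open Scope ring_scope.

(* Partialling out Z0 shows that beta0_hat = beta0 + A eps0 with
   A = (Xt0'Xt0)^-1 Xt0', because A annihilates Z0 and is a left inverse of X0.
   The prediction error is then M1 (y1 - X1 beta0_hat) = Xt1 eta - Xt1 A eps0 + M1 eps1,
   a fixed matrix B applied to the stacked noise u = (eps0; eps1; eta).
   Independence makes the three blocks of u uncorrelated, so u has second-moment
   matrix S = diag(sigma0^2 I, sigma1^2 I, sigma_eta^2 I) and E|Bu|^2 = tr(B S B')
   splits into sigma0^2 tr(A A' Xt1'Xt1) + sigma1^2 tr M1 + sigma_eta^2 tr(Xt1'Xt1),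
   where A A' = (Xt0'Xt0)^-1 and tr M1 = n1 - k1. *)

Section ResidualMaker.
Variables (R : comUnitRingType) (m p : nat) (Z : 'M[R]_(m, p)).

Definition resid_mx : 'M[R]_m := 1%:M - Z *m invmx (Z^T *m Z) *m Z^T.

Lemma trmx_resid : resid_mx^T = resid_mx.
Proof.
by rewrite raddfB /= trmx1 !trmx_mul trmxK trmx_inv trmx_mul trmxK mulmxA.
Qed.

Lemma two_step_fit_resid n r (X : 'M[R]_(m, n)) (y : 'M[R]_(m, r)) (b : 'M[R]_(n, r)) :
  y - (Z *m (invmx (Z^T *m Z) *m Z^T *m (y - X *m b)) + X *m b)
  = resid_mx *m (y - X *m b).
Proof. by rewrite mulmxBl mul1mx !mulmxA opprD addrA addrAC. Qed.

Hypothesis hZ : Z^T *m Z \in unitmx.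

Lemma resid_mxZ : resid_mx *m Z = 0.
Proof. by rewrite mulmxBl mul1mx -!mulmxA mulVmx // mulmx1 subrr. Qed.

Lemma resid_mx_idem : resid_mx *m resid_mx = resid_mx.
Proof. by rewrite [in LHS]mulmxBr mulmx1 !mulmxA resid_mxZ !mul0mx subr0. Qed.

Lemma mxtrace_resid : \tr resid_mx = m%:R - p%:R.
Proof. by rewrite raddfB /= mxtrace1 mxtrace_mulC mulmxA mulmxV // mxtrace1. Qed.

End ResidualMaker.

Definition ols_mx (R : comUnitRingType) m n (X : 'M[R]_(m, n)) : 'M[R]_(n, m) :=
  invmx (X^T *m X) *m X^T.

Lemma ols_mx_mul_trmx (R : comUnitRingType) m n (X : 'M[R]_(m, n)) :
  X^T *m X \in unitmx -> ols_mx X *m (ols_mx X)^T = invmx (X^T *m X).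
Proof.
move=> hX; rewrite trmx_mul trmxK mulmxA -(mulmxA (invmx _)) mulVmx // mul1mx.
by rewrite trmx_inv trmx_mul trmxK.
Qed.

Section PartialledOutRegression.
Variables (R : comUnitRingType) (m p n : nat) (Z : 'M[R]_(m, p)) (X : 'M[R]_(m, n)).
Hypotheses (hZ : Z^T *m Z \in unitmx)
  (hX : (resid_mx Z *m X)^T *m (resid_mx Z *m X) \in unitmx).

Lemma ols_resid_mxZ : ols_mx (resid_mx Z *m X) *m Z = 0.
Proof. by rewrite /ols_mx trmx_mul trmx_resid -!mulmxA resid_mxZ // !mulmx0. Qed.

Lemma ols_resid_mxX : ols_mx (resid_mx Z *m X) *m X = 1%:M.
Proof.
have gram : (resid_mx Z *m X)^T *m (resid_mx Z *m X) = (resid_mx Z *m X)^T *m X.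
  by rewrite trmx_mul trmx_resid -mulmxA (mulmxA (resid_mx Z)) resid_mx_idem // mulmxA.
by rewrite /ols_mx -mulmxA -gram mulVmx.
Qed.

Lemma ols_partial_out r (a : 'M[R]_(p, r)) (b : 'M[R]_(n, r)) (e : 'M[R]_(m, r)) :
  ols_mx (resid_mx Z *m X) *m (Z *m a + X *m b + e)
  = b + ols_mx (resid_mx Z *m X) *m e.
Proof. by rewrite !mulmxDr !mulmxA ols_resid_mxZ ols_resid_mxX mul0mx add0r mul1mx. Qed.

End PartialledOutRegression.

Lemma mxtrace_row_block (R : comRingType) m p q (B : 'M[R]_(m, p)) (C : 'M[R]_(m, q))
    (S : 'M[R]_p) (S' : 'M[R]_q) :
  \tr (row_mx B C *m block_mx S 0 0 S' *m (row_mx B C)^T)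
  = \tr (B *m S *m B^T) + \tr (C *m S' *m C^T).
Proof.
by rewrite mul_row_block !mulmx0 addr0 add0r tr_row_mx mul_row_col mxtraceD.
Qed.

Lemma mxtrace_scalar_sandwich (R : comRingType) m p (B : 'M[R]_(m, p)) (s : R) :
  \tr (B *m s%:M *m B^T) = s * \tr (B *m B^T).
Proof. by rewrite mul_mx_scalar -scalemxAl mxtraceZ. Qed.

Lemma gram_mulmx_pairs (R : comRingType) m n (B : 'M[R]_(m, n)) (x : 'cV[R]_n) :
  ((B *m x)^T *m (B *m x)) ord0 ord0
  = \sum_(ab : 'I_n * 'I_n) x ab.1 ord0 * x ab.2 ord0 * (B^T *m B) ab.1 ab.2.
Proof.
rewrite trmx_mul -mulmxA (mulmxA B^T) mxE.
rewrite -(pair_bigA _ (fun a b => x a ord0 * x b ord0 * (B^T *m B) a b)) /=.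
apply: eq_bigr => a _; rewrite !mxE big_distrr /=.
by apply: eq_bigr => b _; rewrite !mxE mulrCA mulrC.
Qed.

Lemma mxtrace_sandwich_pairs (R : comRingType) m n (B : 'M[R]_(m, n)) (S : 'M[R]_n) :
  \tr (B *m S *m B^T) = \sum_(ab : 'I_n * 'I_n) S ab.1 ab.2 * (B^T *m B) ab.1 ab.2.
Proof.
rewrite mxtrace_mulC mulmxA -(pair_bigA _ (fun a b => S a b * (B^T *m B) a b)) /=.
rewrite exchange_big; apply: eq_bigr => b _; rewrite !mxE.
apply: eq_bigr => a _; rewrite mulrC !mxE; congr (_ * _).
by apply: eq_bigr => i _; rewrite !mxE mulrC.
Qed.

Lemma mxtrace_mulmx_trmx_mulmx (R : comRingType) m n p
    (Y : 'M[R]_(m, n)) (A : 'M[R]_(n, p)) :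
  \tr (Y *m A *m (Y *m A)^T) = \tr (A *m A^T *m (Y^T *m Y)).
Proof. by rewrite trmx_mul -!mulmxA mxtrace_mulC !mulmxA. Qed.

Section Independence.
Context d (T : measurableType d) (R : realType) (P : probability T R).
Local Open Scope ereal_scope.

Definition indep_rv (X Y : T -> R) : Prop :=
  forall A B, measurable A -> measurable B ->
    P (X @^-1` A `&` Y @^-1` B) = P (X @^-1` A) * P (Y @^-1` B).

Lemma Lfun2_Lfun1 (X : T -> R) : X \in Lfun P 2%:E -> X \in Lfun P 1.
Proof. exact/Lfun_subset12/fin_num_measure. Qed.

Lemma Lfun_measurable p (X : T -> R) : X \in Lfun P p -> measurable_fun setT X.
Proof. by rewrite inE => /andP[]; rewrite inE. Qed.

Lemma expectationM_indep (X Y : T -> R) :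
  X \in Lfun P 2%:E -> Y \in Lfun P 2%:E -> indep_rv X Y ->
  'E_P[X \* Y] = 'E_P[X] * 'E_P[Y].
Proof.
move=> X2 Y2 hXY.
have mX := Lfun_measurable X2; have mY := Lfun_measurable Y2.
pose Xm : {mfun T >-> R} := HB.pack X (isMeasurableFun.Build _ _ _ _ _ mX).
pose Ym : {mfun T >-> R} := HB.pack Y (isMeasurableFun.Build _ _ _ _ _ mY).
pose XYm : {mfun T >-> (R * R)%type} := HB.pack (fun w => (X w, Y w))
  (isMeasurableFun.Build _ _ _ _ _ (measurable_fun_pair mX mY)).
pose PX := distribution P Xm; pose PY := distribution P Ym.
have joint_law : forall S, measurable S -> (PX \x PY) S = distribution P XYm S.
  apply: product_measure_unique => A B mA mB.
  by rewrite /distribution /pushforward /= -hXY.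
pose f : (R * R)%type -> \bar R := fun z => (z.1 * z.2)%:E.
have mf : measurable_fun setT f.
  by apply/measurable_EFinP/measurable_funM;
    [exact: measurable_fst|exact: measurable_snd].
have iXY := (Lfun1_integrable _ _).1 (Lfun2_mul_Lfun1 X2 Y2).
have joint_integral g : \int[PX \x PY]_z g z = \int[distribution P XYm]_z g z.
  by apply: eq_measure_integral => A mA _; exact: joint_law.
have EXY : 'E_P[X \* Y] = \int[PX \x PY]_z f z.
  by rewrite joint_integral unlock integral_distribution.
have E_law (Z : {mfun T >-> R}) : (Z : T -> R) \in Lfun P 1 ->
    \int[distribution P Z]_y y%:E = 'E_P[Z].
  move=> /(Lfun1_integrable _ _).1 iZ.
  by rewrite unlock integral_distribution //; exact/measurable_EFinP.
have integrable_law (Z : {mfun T >-> R}) : (Z : T -> R) \in Lfun P 1 ->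
    (distribution P Z).-integrable setT EFin.
  move=> /(Lfun1_integrable _ _).1 /integrableP[_ iZ].
  apply/integrableP; split; first exact/measurable_EFinP.
  by rewrite ge0_integral_distribution //; exact: measurableT_comp.
have integrable_f : (PX \x PY).-integrable setT f.
  apply/integrableP; split => //; rewrite joint_integral.
  rewrite ge0_integral_distribution //; last exact: measurableT_comp.
  by case/integrableP: iXY.
rewrite EXY -(integral12_prod_meas1 integrable_f) /fubini_F /f /=.
have X1 := Lfun2_Lfun1 X2; have Y1 := Lfun2_Lfun1 Y2.
under eq_integral => x _.
  rewrite (eq_integral (fun y => x%:E * y%:E)); last by move=> y _; rewrite EFinM.
  rewrite integralZl //; last exact: (integrable_law Ym Y1).
  rewrite (E_law Ym Y1); over.
rewrite -(fineK (expectation_fin_num Y1)) integralZr //;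
  last exact: (integrable_law Xm X1).
by rewrite (E_law Xm X1).
Qed.

Definition box_at n (i : 'I_n) (A : set R) : 'I_n -> set R :=
  fun j => if j == i then A else setT.

Lemma box_event_at n (U : T -> 'cV[R]_n) i A :
  box_event U (box_at i A) = rvcoord U i @^-1` A.
Proof.
apply/seteqP; split => w /=; first by move=> /(_ i); rewrite /box_at eqxx.
by move=> Ai j; rewrite /box_at; case: eqP => [->|].
Qed.

Lemma box_eventT n (U : T -> 'cV[R]_n) : box_event U (fun=> setT) = setT.
Proof. by apply/seteqP; split. Qed.

Section Independent3.
Variables (p q r : nat) (U : T -> 'cV[R]_p) (V : T -> 'cV[R]_q) (W : T -> 'cV[R]_r).

Lemma independent3_swap12 : independent3 P U V W -> independent3 P V U W.
Proof.
by move=> h B A C mB mA mC; rewrite (setIC (box_event V B)) h // (muleC (P _)).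
Qed.

Lemma independent3_swap23 : independent3 P U V W -> independent3 P U W V.
Proof.
by move=> h A C B mA mC mB; rewrite -setIA (setIC (box_event W C)) setIA h // muleAC.
Qed.

Lemma independent3_indep_rv : independent3 P U V W ->
  forall i j, indep_rv (rvcoord U i) (rvcoord V j).
Proof.
move=> h i j A B mA mB.
have mbox n (k : 'I_n) S : measurable S -> forall l, measurable (box_at k S l).
  by move=> mS l; rewrite /box_at; case: eqP.
have := h (box_at i A) (box_at j B) (fun=> setT)
  (mbox _ _ _ mA) (mbox _ _ _ mB) (fun=> measurableT).
by rewrite !box_event_at box_eventT setIT probability_setT mule1.
Qed.

End Independent3.

End Independence.

Section SecondMoments.
Context d (T : measurableType d) (R : realType) (P : probability T R).
Local Open Scope ereal_scope.

Definition second_moment_mx n (U : T -> 'cV[R]_n) (S : 'M[R]_n) : Prop :=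
  (forall a, rvcoord U a \in Lfun P 2%:E) /\
  forall a b, 'E_P[rvcoord U a \* rvcoord U b] = (S a b)%:E.

Definition orthogonal_rv p q (U : T -> 'cV[R]_p) (V : T -> 'cV[R]_q) : Prop :=
  forall a b, 'E_P[rvcoord U a \* rvcoord V b] = 0.

Lemma orthogonal_rvC p q (U : T -> 'cV[R]_p) (V : T -> 'cV[R]_q) :
  orthogonal_rv U V -> orthogonal_rv V U.
Proof.
by move=> h a b; rewrite -(h b a); congr expectation; apply/funext => w /=; rewrite mulrC.
Qed.

Lemma second_moment_mean0_cov n (U : T -> 'cV[R]_n) s :
  mean0_cov_scalar P U s -> second_moment_mx U s%:M.
Proof.
case=> _ U2 U0 cov; split => // a b.
have := cov a b; rewrite covarianceE ?Lfun2_mul_Lfun1 ?Lfun2_Lfun1 //.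
by rewrite !U0 mul0e sube0 mxE mulr_natr.
Qed.

Lemma orthogonal_indep p q (U : T -> 'cV[R]_p) (V : T -> 'cV[R]_q) s s' :
  mean0_cov_scalar P U s -> mean0_cov_scalar P V s' ->
  (forall i j, indep_rv P (rvcoord U i) (rvcoord V j)) -> orthogonal_rv U V.
Proof.
by case=> _ U2 U0 _ [_ V2 V0 _] h a b; rewrite expectationM_indep // U0 V0 mul0e.
Qed.

Definition col_rv p q (U : T -> 'cV[R]_p) (V : T -> 'cV[R]_q) : T -> 'cV[R]_(p + q) :=
  fun w => col_mx (U w) (V w).

Lemma rvcoord_col_rvu p q (U : T -> 'cV[R]_p) (V : T -> 'cV[R]_q) i :
  rvcoord (col_rv U V) (lshift q i) = rvcoord U i.
Proof. by apply/funext => w; rewrite /rvcoord col_mxEu. Qed.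

Lemma rvcoord_col_rvd p q (U : T -> 'cV[R]_p) (V : T -> 'cV[R]_q) i :
  rvcoord (col_rv U V) (rshift p i) = rvcoord V i.
Proof. by apply/funext => w; rewrite /rvcoord col_mxEd. Qed.

Lemma second_moment_col_rv p q (U : T -> 'cV[R]_p) (V : T -> 'cV[R]_q) S S' :
  second_moment_mx U S -> second_moment_mx V S' -> orthogonal_rv U V ->
  second_moment_mx (col_rv U V) (block_mx S 0 0 S').
Proof.
move=> [U2 hU] [V2 hV] hUV; split=> [a|a b].
  by case: (split_ordP a) => i ->; rewrite ?rvcoord_col_rvu ?rvcoord_col_rvd.
case: (split_ordP a) => i ->; case: (split_ordP b) => j ->;
  rewrite ?rvcoord_col_rvu ?rvcoord_col_rvd ?block_mxEul ?block_mxEur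
    ?block_mxEdl ?block_mxEdr ?mxE //.
exact: orthogonal_rvC.
Qed.

Lemma orthogonal_col_rv p q r (U : T -> 'cV[R]_p) (V : T -> 'cV[R]_q)
    (W : T -> 'cV[R]_r) :
  orthogonal_rv U V -> orthogonal_rv U W -> orthogonal_rv U (col_rv V W).
Proof.
move=> hV hW a b; case: (split_ordP b) => j ->;
  by rewrite ?rvcoord_col_rvu ?rvcoord_col_rvd.
Qed.

Lemma expectation_sum_fin (I : finType) (F : I -> T -> R) :
  (forall i, F i \in Lfun P 1) ->
  'E_P[fun w => (\sum_i F i w)%R] = \sum_i 'E_P[F i].
Proof.
move=> F1; rewrite unlock; under eq_integral do rewrite -sumEFin.
by rewrite integral_sum // => i; exact/(Lfun1_integrable _ _).1.
Qed.

Lemma expectation_gram_mulmx m n (U : T -> 'cV[R]_n) (S : 'M[R]_n) (B : 'M[R]_(m, n)) :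
  second_moment_mx U S ->
  'E_P[fun w => ((B *m U w)^T *m (B *m U w)) ord0 ord0] = (\tr (B *m S *m B^T))%:E.
Proof.
case=> U2 hU; have U2U ab := Lfun2_mul_Lfun1 (U2 ab.1) (U2 ab.2).
under [X in 'E_P[X]]funext => w do rewrite gram_mulmx_pairs.
rewrite expectation_sum_fin => [|ab]; last exact: Lfun_scale (lexx _) (U2U ab).
under eq_bigr => ab _ do rewrite (expectationZl _ (U2U ab)) hU -EFinM.
by rewrite sumEFin mxtrace_sandwich_pairs; under eq_bigr do rewrite mulrC.
Qed.

Lemma second_moment_independent3 p q r (U : T -> 'cV[R]_p) (V : T -> 'cV[R]_q)
    (W : T -> 'cV[R]_r) s s' s'' :
  mean0_cov_scalar P U s -> mean0_cov_scalar P V s' -> mean0_cov_scalar P W s'' ->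
  independent3 P U V W ->
  second_moment_mx (col_rv U (col_rv V W))
    (block_mx s%:M 0 0 (block_mx s'%:M 0 0 s''%:M)).
Proof.
move=> hU hV hW hUVW.
have oUV := orthogonal_indep hU hV (independent3_indep_rv hUVW).
have oUW := orthogonal_indep hU hW (independent3_indep_rv (independent3_swap23 hUVW)).
have oVW := orthogonal_indep hV hW
  (independent3_indep_rv (independent3_swap23 (independent3_swap12 hUVW))).
apply: second_moment_col_rv (second_moment_mean0_cov hU) _ (orthogonal_col_rv oUV oUW).
exact: second_moment_col_rv (second_moment_mean0_cov hV) (second_moment_mean0_cov hW) oVW.
Qed.

End SecondMoments.

Theorem proposition2
  (d : measure_display) (T : measurableType d) (R : realType)
  (P : probability T R)
  (n0 n1 m0 k k1 : nat) (hn0 : (0 < n0)%N) (hn1 : (0 < n1)%N)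
  (Z0 : 'M[R]_(n0, m0)) (X0 : 'M[R]_(n0, k))
  (W1 : 'M[R]_(n1, k1)) (X1 : 'M[R]_(n1, k))
  (hZ0 : Z0^T *m Z0 \in unitmx) (hW1 : W1^T *m W1 \in unitmx)
  (M0 := 1%:M - Z0 *m invmx (Z0^T *m Z0) *m Z0^T)
  (Xt0 := M0 *m X0)
  (M1 := 1%:M - W1 *m invmx (W1^T *m W1) *m W1^T)
  (Xt1 := M1 *m X1)
  (hXt0 : Xt0^T *m Xt0 \in unitmx)
  (alpha0 : 'cV[R]_m0) (alpha1 : 'cV[R]_k1) (beta0 : 'cV[R]_k)
  (sigma0 sigma1 sigma_eta : R)
  (eps0 : T -> 'cV[R]_n0) (eps1 : T -> 'cV[R]_n1) (eta : T -> 'cV[R]_k)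
  (heps0 : mean0_cov_scalar P eps0 (sigma0 ^+ 2))
  (heps1 : mean0_cov_scalar P eps1 (sigma1 ^+ 2))
  (heta : mean0_cov_scalar P eta (sigma_eta ^+ 2))
  (hind : independent3 P eps0 eps1 eta)
  (y0 : T -> 'cV[R]_n0) (y1 : T -> 'cV[R]_n1) (beta1 : T -> 'cV[R]_k)
  (hy0 : forall w, y0 w = Z0 *m alpha0 + X0 *m beta0 + eps0 w)
  (hy1 : forall w, y1 w = W1 *m alpha1 + X1 *m beta1 w + eps1 w)
  (hbeta1 : forall w, beta1 w = beta0 + eta w)
  (beta0_hat : T -> 'cV[R]_k) (alpha1_hat : T -> 'cV[R]_k1)
  (y1_hat : T -> 'cV[R]_n1)
  (hb0 : forall w, beta0_hat w = invmx (Xt0^T *m Xt0) *m Xt0^T *m y0 w)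
  (ha1 : forall w, alpha1_hat w
           = invmx (W1^T *m W1) *m W1^T *m (y1 w - X1 *m beta0_hat w))
  (hyh : forall w, y1_hat w = W1 *m alpha1_hat w + X1 *m beta0_hat w) :
  ((n1%:R)^-1%:E *
     'E_P[fun w => ((y1 w - y1_hat w)^T *m (y1 w - y1_hat w)) ord0 ord0])%E
  = ((n1%:R - k1%:R) / n1%:R * sigma1 ^+ 2
     + sigma_eta ^+ 2 / n1%:R * \tr (Xt1^T *m Xt1)
     + sigma0 ^+ 2 / n1%:R * \tr (invmx (Xt0^T *m Xt0) *m (Xt1^T *m Xt1)))%:E.
Proof.
pose A := ols_mx Xt0.
have hb w : beta0_hat w = beta0 + A *m eps0 w.
  by rewrite hb0 hy0; exact: ols_partial_out.
pose B := row_mx (- (Xt1 *m A)) (row_mx M1 Xt1).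
have pred_err w : y1 w - y1_hat w = B *m col_rv eps0 (col_rv eps1 eta) w.
  rewrite hyh ha1 two_step_fit_resid hy1 hbeta1 hb /B /col_rv !mul_row_col.
  rewrite mulmxBr !mulmxDr (mulmxA _ W1) resid_mxZ // mul0mx add0r.
  rewrite opprD addrACA (addrC (resid_mx W1 *m (X1 *m beta0))) addrK.
  rewrite [LHS]addrC -[LHS]addrA [LHS]addrCA.
  by rewrite mulNmx /Xt1 -!mulmxA.
under [X in 'E_P[X]%E]funext => w do rewrite pred_err.
rewrite (expectation_gram_mulmx B (second_moment_independent3 heps0 heps1 heta hind)).
rewrite !mxtrace_row_block !mxtrace_scalar_sandwich -EFinM; congr EFin.
rewrite linearN /= mulNmx mulmxN opprK mxtrace_mulmx_trmx_mulmx ols_mx_mul_trmx //.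
rewrite trmx_resid resid_mx_idem // mxtrace_resid // (mxtrace_mulC Xt1).
ring.
Qed.
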